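(* Let $S$ be a semigroup. Every strongly irreducible semiprime interior ideal of $S$ is a strongly prime interior ideal of $S$.
   Context: A subsemigroup $I$ of $S$ (non-empty with $II\subseteq I$) is an interior ideal if $SIS\subseteq I$. For subsets $A,B$, $AB=\{ab:a\in A,b\in B\}$ and $A^2=AA$. An interior ideal $I$ is semiprime if for every interior ideal $A$ of $S$, $A^{2}\subseteq I$ implies $A\subseteq I$. It is strongly irreducible if for all interior ideals $I_1,I_2$ of $S$, $I_1\cap I_2\subseteq I$ implies $I_1\subseteq I$ or $I_2\subseteq I$. It is strongly prime if for all interior ideals $I_1,I_2$ of $S$, $I_1I_2\cap I_2I_1\subseteq I$ implies $I_1\subseteq I$ or $I_2\subseteq I$. *)

Record semigroup := Semigroup {
  carrier :> Type;
  op : carrier -> carrier -> carrier;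
  op_assoc : forall x y z, op x (op y z) = op (op x y) z
}.

Section Defs.
Variable S : semigroup.

Definition subset (A B : S -> Prop) : Prop := forall x, A x -> B x.

Definition setmul (A B : S -> Prop) : S -> Prop :=
  fun z => exists a b, A a /\ B b /\ z = op S a b.

Definition setI (A B : S -> Prop) : S -> Prop := fun x => A x /\ B x.

Definition setT : S -> Prop := fun _ => True.

Definition interior_ideal (I : S -> Prop) : Prop :=
  (exists x, I x) /\
  subset (setmul I I) I /\
  subset (setmul (setmul setT I) setT) I.

Definition semiprime (I : S -> Prop) : Prop :=
  interior_ideal I /\
  forall A, interior_ideal A -> subset (setmul A A) I -> subset A I.

Definition strongly_irreducible (I : S -> Prop) : Prop :=
  interior_ideal I /\
  forall I1 I2, interior_ideal I1 -> interior_ideal I2 ->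
    subset (setI I1 I2) I -> subset I1 I \/ subset I2 I.

Definition strongly_prime (I : S -> Prop) : Prop :=
  interior_ideal I /\
  forall I1 I2, interior_ideal I1 -> interior_ideal I2 ->
    subset (setI (setmul I1 I2) (setmul I2 I1)) I -> subset I1 I \/ subset I2 I.

End Defs.

(* If I1 and I2 are interior ideals, so is I1 ∩ I2 (b a b a b witnesses
   non-emptiness), and (I1 ∩ I2)^2 ⊆ I1 I2 ∩ I2 I1 ⊆ I.  Semiprimeness gives
   I1 ∩ I2 ⊆ I, and strong irreducibility gives I1 ⊆ I or I2 ⊆ I. *)


Section InteriorIdeals.
Variable S : semigroup.

Lemma interior_ideal_mul_mem (I : S -> Prop) (s x t : S) :
  interior_ideal S I -> I x -> I (op S (op S s x) t).
Proof.
  intros (_ & _ & Hsxt) Hx.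
  apply Hsxt. exists (op S s x), t. repeat split.
  exists s, x. repeat split; assumption.
Qed.

Lemma interior_ideal_setI (I1 I2 : S -> Prop) :
  interior_ideal S I1 -> interior_ideal S I2 -> interior_ideal S (setI S I1 I2).
Proof.
  intros H1 H2.
  pose proof H1 as [[a Ha] [Hmul1 _]].
  pose proof H2 as [[b Hb] [Hmul2 _]].
  split; [|split].
  - exists (op S (op S b a) (op S (op S b a) b)). split.
    + exact (interior_ideal_mul_mem I1 b a (op S (op S b a) b) H1 Ha).
    + assert (Hw : op S (op S b a) (op S (op S b a) b)
                   = op S (op S (op S b a) b) (op S a b))
        by (rewrite !op_assoc; reflexivity).
      rewrite Hw. exact (interior_ideal_mul_mem I2 _ _ _ H2 Hb).
  - intros z (x & y & [Hx1 Hx2] & [Hy1 Hy2] & ->). split.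
    + apply Hmul1. exists x, y. auto.
    + apply Hmul2. exists x, y. auto.
  - intros z (u & t & (s & x & _ & [Hx1 Hx2] & ->) & _ & ->). split.
    + exact (interior_ideal_mul_mem I1 s x t H1 Hx1).
    + exact (interior_ideal_mul_mem I2 s x t H2 Hx2).
Qed.

Lemma setmul_setI_sq (A B : S -> Prop) :
  subset S (setmul S (setI S A B) (setI S A B))
           (setI S (setmul S A B) (setmul S B A)).
Proof.
  intros z (x & y & [HxA HxB] & [HyA HyB] & ->). split.
  - exists x, y. auto.
  - exists x, y. auto.
Qed.

End InteriorIdeals.

Theorem mainTheorem10 (S : semigroup) (I : S -> Prop) :
  interior_ideal S I -> strongly_irreducible S I -> semiprime S I ->
  strongly_prime S I.
Proof.
  intros HI [_ Hirr] [_ Hsemiprime]. split; [exact HI|].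
  intros I1 I2 H1 H2 Hprod. apply Hirr; [exact H1 | exact H2 |].
  apply Hsemiprime; [apply interior_ideal_setI; assumption |].
  intros z Hz. apply Hprod, setmul_setI_sq, Hz.
Qed.
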